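(* Let $m$ and $k$ be odd integers with $k\ge3$ and $m\ge 2k+3$. Then $\mathrm{msum}(mk,k)\ge2$.
   Context: For positive integers $n>k$, let $S_n$ be the set of permutations $\pi=(\pi_1,\dots,\pi_n)$ of $1,\dots,n$, with cyclic indexing $\pi_{n+i}=\pi_i$, and $s_i=\sum_{j=0}^{k-1}\pi_{i+j}$ for $i=1,\dots,n$. Define $\mathrm{msum}(\pi,k)=\max_{1\le i\le n}s_i-\frac{k(n+1)}{2}$ and $\mathrm{msum}(n,k)=\min_{\pi\in S_n}\mathrm{msum}(\pi,k)$. *)

From HB Require Import structures.
From mathcomp Require Import all_boot all_order all_algebra all_fingroup.
Set Implicit Arguments. Unset Strict Implicit. Unset Printing Implicit Defensive.
Import Order.TTheory GRing.Theory Num.Theory.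
Local Open Scope ring_scope.

(* A permutation pi of {1,...,n} is represented by p : 'S_n (a permutation of
   'I_n = {0,...,n-1}) via pi_{x+1} = (p x) + 1.  Cyclic indexing: position x
   (0-based, any natural) denotes pi_{(x mod n)+1}. *)
Definition pval (n : nat) (p : 'S_n) (x : nat) : nat :=
  match @insub nat (fun y => (y < n)%N) 'I_n (x %% n)%N with
  | Some o => ((p o).+1)%N
  | None => 0
  end.

(* s_{i+1} = sum_{j=0}^{k-1} pi_{i+1+j}, for 0-based i *)
Definition wsum (n k : nat) (p : 'S_n) (i : nat) : nat :=
  \sum_(j < k) pval p (i + j).

Definition msum_perm (n k : nat) (p : 'S_n) : rat :=
  ((\max_(i < n) wsum k p i)%N)%:R - ((k * (n + 1))%N)%:R / 2%:R.

Definition msum (n k : nat) : rat :=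
  \big[Order.min/msum_perm k (1 : 'S_n)]_(p : 'S_n) msum_perm k p.

From HB Require Import structures.
From mathcomp Require Import all_boot all_order all_algebra all_fingroup.
From mathcomp Require Import zify.
Import Order.TTheory GRing.Theory Num.Theory.
Set Implicit Arguments. Unset Strict Implicit. Unset Printing Implicit Defensive.

(* Suppose every window sum s_i = f_i + ... + f_(i+k-1) of the cyclic arrangement f
   of 1..n, n = m k, is at most k q + 1, where 2 q = n + 1, and let h_i = k q + 1 - s_i
   be the deficits.  Then h_(i+1) - h_i = f_i - f_(i+k), and the deficits along each
   residue class c mod k sum to m, so the cyclic variation of the m distinct values
   f_(c+jk) is 2m - 2 M_c, with M_c = sum_j min(h_(c+jk), h_(c+jk+1)).  Counting level
   crossings, a cyclic sequence of m distinct numbers has variation at least 2m - 2,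
   and at least 2m - 4 + 2P with P peaks (likewise for valleys); hence M_c <= 1 and the
   ascents [f_i < f_(i+k)] change at most 4 - 2 M_c times along the class.
   On the other hand, k being odd, if the ascents at i and i + k agree then two
   consecutive ascents among i, ..., i + k agree, and this forces two consecutive
   positive deficits.  Summing both counts over all i gives
   m k <= 4k + (2k - 2) sum_c M_c <= 2k^2 + 2k, i.e. m <= 2k + 2. *)

Definition periodic (T : Type) (N : nat) (g : nat -> T) := forall y, g (y + N) = g y.

Section Periodic.
Variables (T : Type) (N : nat) (g : nat -> T).
Hypothesis g_per : periodic N g.

Lemma periodic_addnM r q : g (r + q * N) = g r.
Proof.
elim: q => [|q IH]; first by rewrite addn0.
by rewrite mulSn (addnC N) addnA g_per IH.
Qed.

Lemma periodic_mod y : g y = g (y %% N).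
Proof. by rewrite {1}(divn_eq y N) addnC periodic_addnM. Qed.

Lemma periodic_reach x y : 0 < N -> exists2 d, d < N & g (x + d) = g y.
Proof.
move=> N_gt0; rewrite (periodic_mod y).
have x_mod := ltn_pmod x N_gt0; have y_mod := ltn_pmod y N_gt0.
have x_div := divn_eq x N.
case: (leqP (x %% N) (y %% N)) => x_le_y.
  exists (y %% N - x %% N); first lia.
  by rewrite -(periodic_addnM (y %% N) (x %/ N)); congr g; lia.
exists (y %% N + N - x %% N); first lia.
by rewrite -(periodic_addnM (y %% N) (x %/ N).+1) mulSn; congr g; lia.
Qed.

End Periodic.

Lemma sum_periodic_shift N (g : nat -> nat) x :
  periodic N g -> \sum_(i < N) g (x + i) = \sum_(i < N) g i.
Proof.
move=> g_per; elim: x => [|x IH]; first by apply: eq_bigr => i _; rewrite add0n.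
rewrite -IH; case: N g_per {IH} => [|N] g_per; first by rewrite !big_ord0.
rewrite big_ord_recr big_ord_recl /= addn0 addnC addSnnS g_per.
by congr (_ + _); apply: eq_bigr => i _; rewrite addSnnS.
Qed.

Lemma sum_periodic_succ N (g : nat -> nat) :
  periodic N g -> \sum_(i < N) g i.+1 = \sum_(i < N) g i.
Proof. by move=> g_per; rewrite -(sum_periodic_shift 1 g_per). Qed.

Lemma periodic_argmin N (a : nat -> nat) : 0 < N -> periodic N a ->
  exists2 l, l < N & forall j, a l <= a j.
Proof.
move=> N_gt0 a_per.
case: (@arg_minnP _ (Ordinal N_gt0) xpredT (fun i : 'I_N => a i) isT) => i _ min_i.
by exists i => // j; rewrite (periodic_mod a_per j); exact: (min_i (Ordinal (ltn_pmod j N_gt0))).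
Qed.

Lemma periodic_argmax N (a : nat -> nat) : 0 < N -> periodic N a ->
  exists2 l, l < N & forall j, a j <= a l.
Proof.
move=> N_gt0 a_per.
case: (@arg_maxnP _ (Ordinal N_gt0) xpredT (fun i : 'I_N => a i) isT) => i _ max_i.
by exists i => // j; rewrite (periodic_mod a_per j); exact: (max_i (Ordinal (ltn_pmod j N_gt0))).
Qed.

Lemma sum_neq_add_eq (T : finType) (u v : T -> bool) :
  \sum_(i : T) (u i != v i) + \sum_(i : T) (u i == v i) = #|T|.
Proof. by rewrite -big_split -sum1_card; apply: eq_bigr => i _; case: (_ == _). Qed.

Section SignChanges.
Variable b : nat -> bool.

Definition changes x d := \sum_(t < d) (b (x + t) != b (x + t).+1).

Lemma changesD x d e : changes x (d + e) = changes x d + changes (x + d) e.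
Proof. by rewrite /changes big_split_ord; congr (_ + _); apply: eq_bigr => t _; rewrite addnA. Qed.

Lemma changes_parity x d : b (x + d) = b x (+) odd (changes x d).
Proof.
elim: d => [|d IH]; first by rewrite addn0 /changes big_ord0 addbF.
rewrite /changes big_ord_recr /= -/(changes x d) oddD addbA -IH addnS.
by case: (b (x + d)); case: (b (x + d).+1).
Qed.

Lemma changes_ge x d : (b x != b (x + d)) <= changes x d.
Proof.
elim: d => [|d IH]; first by rewrite addn0 eqxx.
rewrite /changes big_ord_recr /= -/(changes x d) addnS.
apply: leq_trans (leq_add IH (leqnn _)).
by case: (b x); case: (b (x + d)); case: (b (x + d).+1).
Qed.

Lemma odd_shift_eq_le k x : odd k ->
  (b x == b (x + k)) <= \sum_(t < k) (b (x + t) == b (x + t).+1).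
Proof.
move=> k_odd.
have split_k : changes x k + \sum_(t < k) (b (x + t) == b (x + t).+1) = k.
  exact: etrans (sum_neq_add_eq _ _) (card_ord k).
case: (ltnP (changes x k) k) => [lt_k | ge_k].
  by apply: leq_trans (leq_b1 _) _; lia.
have all_change : changes x k = k by lia.
by rewrite changes_parity all_change k_odd; case: (b x).
Qed.

Variable N : nat.
Hypothesis b_per : periodic N b.

Lemma cyclic_changesE x : \sum_(t < N) (b t != b t.+1) = changes x N.
Proof.
rewrite /changes (@sum_periodic_shift N (fun t => nat_of_bool (b t != b t.+1))) //.
by move=> y /=; rewrite b_per -addSn b_per.
Qed.

Lemma cyclic_changes_ge2 x d : d <= N -> b x != b (x + d) ->
  2 <= \sum_(t < N) (b t != b t.+1).
Proof.
move=> d_le bxd; rewrite (cyclic_changesE x) -(subnKC d_le) changesD.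
have := changes_ge x d; have := changes_ge (x + d) (N - d).
by rewrite -addnA subnKC // b_per eq_sym bxd; lia.
Qed.

Lemma cyclic_changes_ge4 x d : 1 < d < N.-1 ->
  b x -> ~~ b (x + 1) -> b (x + d) -> ~~ b (x + N.-1) ->
  4 <= \sum_(t < N) (b t != b t.+1).
Proof.
move=> /andP[d_gt1 d_lt] bx bx1 bxd bxN.
rewrite (cyclic_changesE x) (_ : N = 1 + (d - 1) + (N.-1 - d) + 1); last by lia.
rewrite !changesD !addnA.
have := changes_ge x 1; have := changes_ge (x + 1) (d - 1).
have := changes_ge (x + 1 + (d - 1)) (N.-1 - d).
have := changes_ge (x + 1 + (d - 1) + (N.-1 - d)) 1.
rewrite (_ : x + 1 + (d - 1) = x + d); last by lia.
rewrite (_ : x + d + (N.-1 - d) = x + N.-1); last by lia.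
rewrite (_ : x + N.-1 + 1 = x + N); last by lia.
by rewrite b_per bx (negbTE bx1) bxd (negbTE bxN) /=; lia.
Qed.

End SignChanges.

Section DistinctValues.
Variables (m : nat) (a : nat -> nat).
Hypothesis a_inj : forall i j, i < m -> j < m -> a i = a j -> i = j.

Lemma sum_eq_le1 u : \sum_(l < m) (a l == u) <= 1.
Proof.
case: (pickP (fun l : 'I_m => a l == u)) => [l0 /eqP al0 | none]; last first.
  by rewrite big1 // => l _; rewrite none.
rewrite (bigD1 l0) //= al0 eqxx big1 // => l l_neq.
case: eqP => // al; case/eqP: l_neq; apply: val_inj.
by apply: a_inj; rewrite /= ?ltn_ord // al al0.
Qed.

Lemma sum_in_interval_le lo d : \sum_(l < m) (lo < a l <= lo + d) <= d.
Proof.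
elim: d => [|d IH]; first by rewrite big1 // => l _; lia.
apply: (@leq_trans (\sum_(l < m) ((lo < a l <= lo + d) + (a l == lo + d.+1)))).
  by apply: leq_sum => l _; lia.
by rewrite big_split /= -[d.+1]addn1 leq_add // sum_eq_le1.
Qed.

Lemma sum_between_le x y : \sum_(l < m) ((a l <= x) != (a l <= y)) <= `|x - y|.
Proof.
wlog le_xy : x y / x <= y.
  move=> le_sum; case: (leqP x y) => [/le_sum // | /ltnW/le_sum].
  by rewrite distnC; under eq_bigr do rewrite eq_sym.
apply: leq_trans (leq_trans _ (sum_in_interval_le x (y - x))) _; last lia.
by apply: leq_sum => l _; lia.
Qed.

End DistinctValues.

Section CyclicSequence.
Variables (m : nat) (a : nat -> nat).

Definition variation := \sum_(j < m) `|a j - a j.+1|.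
Definition peaks := \sum_(j < m) ((a j < a j.+1) && (a j.+2 < a j.+1)).
Definition valleys := \sum_(j < m) ((a j.+1 < a j) && (a j.+1 < a j.+2)).

Hypotheses (m_gt0 : 0 < m) (a_per : periodic m a)
  (a_inj : forall i j, i < m -> j < m -> a i = a j -> i = j).

Let crossings v := \sum_(j < m) ((v <= a j) != (v <= a j.+1)).

Let sum_crossings_le_variation : \sum_(l < m) crossings (a l.+1) <= variation.
Proof.
rewrite (@sum_periodic_succ m (fun l => crossings (a l))); last by move=> y; rewrite /= a_per.
by rewrite /crossings exchange_big /=; apply: leq_sum => j _; exact: sum_between_le.
Qed.

Let sum_succ_eq_le1 u : \sum_(l < m) (a l.+1 == u) <= 1.
Proof.
rewrite (@sum_periodic_succ m (fun l => nat_of_bool (a l == u))) ?sum_eq_le1 //.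
by move=> y; rewrite /= a_per.
Qed.

Let crossings_ge2 l j : a j < a l -> 2 <= crossings (a l).
Proof.
move=> lt_jl; have [d d_lt ad] := periodic_reach a_per l j m_gt0.
apply: (@cyclic_changes_ge2 (fun t => a l <= a t) m _ l d (ltnW d_lt)).
  by move=> y /=; rewrite a_per.
by rewrite /= ad leqnn -ltnNge lt_jl.
Qed.

Let crossings_peak_ge4 l j : a l < a l.+1 -> a l.+2 < a l.+1 -> a l.+1 < a j ->
  4 <= crossings (a l.+1).
Proof.
move=> up down lt_j; have [d d_lt ad] := periodic_reach a_per l.+1 j m_gt0.
have a_wrap : a (l.+1 + m.-1) = a l by rewrite (_ : l.+1 + m.-1 = l + m) ?a_per //; lia.
have d_gt1 : 1 < d by case: d ad {d_lt} => [|[|d]] ad //; rewrite ?addn0 ?addn1 in ad; lia.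
have d_lt' : d < m.-1.
  rewrite ltn_neqAle -ltnS prednK // d_lt andbT; apply/eqP => d_eq.
  by move: ad; rewrite d_eq a_wrap; lia.
apply: (@cyclic_changes_ge4 (fun t => a l.+1 <= a t) m _ l.+1 d) => /=.
- by move=> y /=; rewrite a_per.
- by rewrite d_gt1 d_lt'.
- exact: leqnn.
- by rewrite addn1 -ltnNge.
- by rewrite ad ltnW.
- by rewrite a_wrap -ltnNge.
Qed.

Let crossings_ge2_min lmin l : (forall j, a lmin <= a j) ->
  2 <= crossings (a l) + 2 * (a l == a lmin).
Proof.
move=> min_l; case: eqP => [_ | ne]; first by rewrite muln1 leq_addl.
rewrite muln0 addn0; apply: (@crossings_ge2 l lmin).
by rewrite ltn_neqAle min_l andbT eq_sym; apply/eqP.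
Qed.

Lemma variation_ge : 2 * m <= variation + 2.
Proof.
have [lmin _ min_l] := periodic_argmin m_gt0 a_per.
have : \sum_(l < m) 2 <= \sum_(l < m) (crossings (a l.+1) + 2 * (a l.+1 == a lmin)).
  by apply: leq_sum => l _; exact: crossings_ge2_min.
rewrite sum_nat_const card_ord big_split /= -big_distrr /=.
have := sum_crossings_le_variation; have := sum_succ_eq_le1 (a lmin).
set C := \sum_(l < m) crossings _; set E := \sum_(l < m) _; lia.
Qed.

Lemma variation_ge_peaks : 2 * m + 2 * peaks <= variation + 4.
Proof.
have [lmin _ min_l] := periodic_argmin m_gt0 a_per.
have [lmax _ max_l] := periodic_argmax m_gt0 a_per.
have peak_l l : 2 + 2 * ((a l < a l.+1) && (a l.+2 < a l.+1)) <=
    crossings (a l.+1) + 2 * (a l.+1 == a lmin) + 2 * (a l.+1 == a lmax).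
  case: (boolP (_ && _)) => [/andP[up down] | _]; last first.
    by have := crossings_ge2_min l.+1 min_l; lia.
  have ne_min : (a l.+1 == a lmin) = false by apply/eqP; have := min_l l; lia.
  rewrite ne_min; case: eqP => [_ | ne_max]; first by have := crossings_ge2 up; lia.
  have lt_max : a l.+1 < a lmax by rewrite ltn_neqAle max_l andbT; apply/eqP.
  by have := crossings_peak_ge4 up down lt_max; lia.
have : \sum_(l < m) (2 + 2 * ((a l < a l.+1) && (a l.+2 < a l.+1))) <=
    \sum_(l < m) (crossings (a l.+1) + 2 * (a l.+1 == a lmin) + 2 * (a l.+1 == a lmax)).
  by apply: leq_sum => l _; exact: peak_l.
rewrite !big_split /= !big1_eq sum_nat_const card_ord -/peaks.
have := sum_crossings_le_variation.
have := sum_succ_eq_le1 (a lmin); have := sum_succ_eq_le1 (a lmax).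
set C := \sum_(l < m) crossings _; set E := \sum_(l < m) _; set F := \sum_(l < m) _; lia.
Qed.

End CyclicSequence.

Lemma variation_ge_valleys m N (a : nat -> nat) : 0 < m -> periodic m a ->
  (forall i j, i < m -> j < m -> a i = a j -> i = j) -> (forall j, a j <= N) ->
  2 * m + 2 * valleys m a <= variation m a + 4.
Proof.
move=> m_gt0 a_per a_inj a_le.
have := @variation_ge_peaks m (fun j => N - a j) m_gt0.
have -> : variation m (fun j => N - a j) = variation m a.
  by apply: eq_bigr => j _; have := a_le j; have := a_le j.+1; lia.
have -> : peaks m (fun j => N - a j) = valleys m a.
  by apply: eq_bigr => j _; have := a_le j; have := a_le j.+1; have := a_le j.+2; lia.
apply.
- by move=> y; rewrite a_per.
- by move=> i j i_lt j_lt eq_ij; apply: a_inj => //; have := a_le i; have := a_le j; lia.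
Qed.

Definition window_sum (f : nat -> nat) (k i : nat) := \sum_(j < k) f (i + j).

Lemma window_sum_periodic N (f : nat -> nat) k : periodic N f -> periodic N (window_sum f k).
Proof. by move=> f_per y; apply: eq_bigr => j _; rewrite addnAC f_per. Qed.

Lemma window_sum_succ (f : nat -> nat) k i : 0 < k ->
  window_sum f k i.+1 + f i = window_sum f k i + f (i + k).
Proof.
case: k => [|k] // _; rewrite /window_sum big_ord_recr big_ord_recl /= addn0.
rewrite addnC addnS addSn addnA; congr (_ + _ + _); apply: eq_bigr => j _.
by rewrite addSnnS.
Qed.

Lemma sum_blocks m k (g : nat -> nat) :
  \sum_(i < m * k) g i = \sum_(j < m) \sum_(t < k) g (j * k + t).
Proof.
elim: m => [|m IH]; first by rewrite mul0n !big_ord0.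
by rewrite mulSnr big_split_ord IH big_ord_recr.
Qed.

Lemma sum_residue_classes m k (g : nat -> nat) :
  \sum_(i < m * k) g i = \sum_(c < k) \sum_(j < m) g (c + j * k).
Proof.
rewrite sum_blocks exchange_big /=.
by apply: eq_bigr => c _; apply: eq_bigr => j _; rewrite addnC.
Qed.

Section SmallWindows.
Variables (m k q : nat) (f : nat -> nat).
Local Notation n := (m * k).
Hypotheses (k_odd : odd k) (m_gt1 : 1 < m) (f_per : periodic n f)
  (f_inj : forall x y, x < n -> y < n -> f x = f y -> x = y)
  (f_le : forall x, f x <= n) (f_sum : \sum_(i < n) f i = n * q)
  (window_le : forall i, window_sum f k i <= k * q + 1).

Let k_gt0 : 0 < k. Proof. by case: k k_odd. Qed.
Let n_gt0 : 0 < n. Proof. by rewrite muln_gt0 k_gt0 andbT ltnW. Qed.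

Let deficit i := k * q + 1 - window_sum f k i.
Let min_deficit i := minn (deficit i) (deficit i.+1).
Let ascent i := f i < f (i + k).

Let deficit_succ i : deficit i.+1 + f (i + k) = deficit i + f i.
Proof.
have := window_sum_succ f i k_gt0; have := window_le i; have := window_le i.+1.
by rewrite /deficit; lia.
Qed.

Let sum_deficit_class c : \sum_(j < m) deficit (c + j * k) = m.
Proof.
have sum_window : \sum_(j < m) window_sum f k (c + j * k) = n * q.
  rewrite -f_sum -(sum_periodic_shift c f_per) (sum_blocks m k (fun i => f (c + i))).
  by apply: eq_bigr => j _; apply: eq_bigr => t _; rewrite addnA.
have : \sum_(j < m) (deficit (c + j * k) + window_sum f k (c + j * k)) = m * (k * q + 1).
  rewrite -[m in RHS]card_ord -sum_nat_const; apply: eq_bigr => j _.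
  by rewrite subnK ?window_le.
rewrite big_split /= sum_window; nia.
Qed.

Let f_shift_neq x : f x != f (x + k).
Proof.
apply/eqP => fx_eq.
have := f_inj (ltn_pmod (x + k) n_gt0) (ltn_pmod x n_gt0).
rewrite -!(periodic_mod f_per) => /(_ (esym fx_eq)) /eqP.
by rewrite eqn_mod_dvd ?leq_addr // addKn => /(dvdn_leq k_gt0); nia.
Qed.

Let class_variation c :
  variation m (fun j => f (c + j * k)) +
  2 * \sum_(j < m) min_deficit (c + j * k) = 2 * m.
Proof.
rewrite /variation big_distrr -big_split /=.
have -> : 2 * m = \sum_(j < m) deficit (c + j * k) + \sum_(j < m) deficit (c.+1 + j * k).
  by rewrite !sum_deficit_class addnn mul2n.
rewrite -big_split /=.
apply: eq_bigr => j _; rewrite /min_deficit mulSnr addnA addSn.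
by have := deficit_succ (c + j * k); lia.
Qed.

Let class_turns c :
  peaks m (fun j => f (c + j * k)) + valleys m (fun j => f (c + j * k)) =
  \sum_(j < m) (ascent (c + j * k) != ascent (c + j * k + k)).
Proof.
rewrite -big_split /=; apply: eq_bigr => j _.
rewrite /ascent !mulSnr !addnA.
have := f_shift_neq (c + j * k); have := f_shift_neq (c + j * k + k); lia.
Qed.

Let class_bound c : c < k ->
  \sum_(j < m) (ascent (c + j * k) != ascent (c + j * k + k)) +
    2 * \sum_(j < m) min_deficit (c + j * k) <= 4 /\
  \sum_(j < m) min_deficit (c + j * k) <= 1.
Proof.
move=> c_lt; pose a j := f (c + j * k).
have m_gt0 : 0 < m by lia.
have a_per : periodic m a by move=> y; rewrite /a mulnDl addnA f_per.
have lt_n j : j < m -> c + j * k < n by move=> j_lt; nia.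
have a_inj i j : i < m -> j < m -> a i = a j -> i = j.
  move=> i_lt j_lt /(f_inj (lt_n i i_lt) (lt_n j j_lt)) /addnI /eqP.
  by rewrite eqn_pmul2r // => /eqP.
have := variation_ge m_gt0 a_per a_inj; have := variation_ge_peaks m_gt0 a_per a_inj.
have := variation_ge_valleys m_gt0 a_per a_inj (fun j => f_le (c + j * k)).
have := class_variation c; have := class_turns c; rewrite -/a.
set M := \sum_(j < m) min_deficit _; set D := \sum_(j < m) _; lia.
Qed.

Let ascent_changes_bound :
  \sum_(i < n) (ascent i != ascent (i + k)) + 2 * \sum_(i < n) min_deficit i
    <= 4 * k /\
  \sum_(i < n) min_deficit i <= k.
Proof.
rewrite (sum_residue_classes m k (fun i => nat_of_bool (ascent i != ascent (i + k)))).
rewrite (sum_residue_classes m k (fun i => min_deficit i)).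
split.
  have -> : 4 * k = \sum_(c < k) 4 by rewrite sum_nat_const card_ord mulnC.
  rewrite big_distrr -big_split /=.
  by apply: leq_sum => c _; case: (class_bound (ltn_ord c)).
apply: (@leq_trans (\sum_(c < k) 1)); last by rewrite sum_nat_const card_ord muln1.
by apply: leq_sum => c _; case: (class_bound (ltn_ord c)).
Qed.

(* Equal consecutive ascents make the deficit strictly monotone on t, t + 1, t + 2. *)
Let equal_ascents_step t :
  (ascent t == ascent t.+1) <= min_deficit t + min_deficit t.+1.
Proof.
have := deficit_succ t; have := deficit_succ t.+1.
have := f_shift_neq t; have := f_shift_neq t.+1.
by rewrite /min_deficit /ascent addSn; lia.
Qed.

Let equal_ascents_bound :
  \sum_(i < n) (ascent i == ascent (i + k)) <= 2 * k * \sum_(i < n) min_deficit i.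
Proof.
have min_deficit_per : periodic n min_deficit.
  have window_per := window_sum_periodic k f_per.
  by move=> y; rewrite /min_deficit /deficit window_per -addSn window_per.
have shift d : \sum_(i < n) min_deficit (i + d) = \sum_(i < n) min_deficit i.
  rewrite -[RHS](sum_periodic_shift d min_deficit_per).
  by apply: eq_bigr => i _; rewrite addnC.
have shift_pair d : \sum_(i < n) (min_deficit (i + d) + min_deficit (i + d).+1) =
    2 * \sum_(i < n) min_deficit i.
  rewrite big_split /=; under [X in _ + X]eq_bigr => i _ do rewrite -addnS.
  by rewrite !shift addnn mul2n.
apply: (@leq_trans
  (\sum_(i < n) \sum_(d < k) (min_deficit (i + d) + min_deficit (i + d).+1))).
  apply: leq_sum => i _; apply: leq_trans (odd_shift_eq_le ascent i k_odd) _.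
  by apply: leq_sum => d _; exact: equal_ascents_step.
rewrite exchange_big /= (eq_bigr _ (fun (d : 'I_k) _ => shift_pair d)).
by rewrite sum_nat_const card_ord mulnCA mulnA.
Qed.

Lemma small_windows_le : m <= 2 * k + 2.
Proof.
have [D_bound M_bound] := ascent_changes_bound.
have C_bound := equal_ascents_bound.
have := etrans (sum_neq_add_eq (fun i : 'I_n => ascent i) (fun i => ascent (i + k))) (card_ord n).
move: D_bound M_bound C_bound.
set D := \sum_(i < n) _; set M := \sum_(i < n) _; set C := \sum_(i < n) _; nia.
Qed.

End SmallWindows.

Section PermutationValues.
Variables (n : nat) (p : 'S_n).

Lemma pval_ltn x (x_lt : x < n) : pval p x = (p (Ordinal x_lt)).+1.
Proof.
rewrite /pval; case: insubP => [o _ o_val | ]; last by rewrite modn_small // x_lt.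
by congr (_.+1); congr (fun_of_perm p _); apply: val_inj; rewrite /= o_val modn_small.
Qed.

Lemma pval_periodic : periodic n (pval p).
Proof. by move=> y; rewrite /pval modnDr. Qed.

Lemma pval_inj x y : x < n -> y < n -> pval p x = pval p y -> x = y.
Proof. by move=> x_lt y_lt; rewrite !pval_ltn => -[] /val_inj /perm_inj []. Qed.

Lemma pval_le x : pval p x <= n.
Proof.
by rewrite /pval; case: insubP => [o _ _ | _] //; exact: ltn_ord.
Qed.

Lemma sum_pval : 2 * \sum_(i < n) pval p i = n * n.+1.
Proof.
have -> : \sum_(i < n) pval p i = \sum_(i < n) (p i).+1.
  by apply: eq_bigr => i _; rewrite pval_ltn; congr (_.+1); congr (fun_of_perm p _); exact: val_inj.
rewrite -(reindex_inj (@perm_inj _ p) : \sum_(i < n) i.+1 = _).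
by elim: (n) => [|n' IH]; rewrite ?big_ord0 // big_ord_recr /= mulnDr IH; nia.
Qed.

End PermutationValues.

Lemma msum_perm_ge2 m k (p : 'S_(m * k)) : odd m -> odd k -> 2 * k + 3 <= m ->
  (2%:R <= msum_perm k p :> rat)%R.
Proof.
move=> m_odd k_odd m_ge; set n := m * k in p *.
have k_gt0 : 0 < k by move: k_odd; case: (k).
have n_gt0 : 0 < n by rewrite muln_gt0 k_gt0 andbT; lia.
set q := n.+1 %/ 2.
have nq : n.+1 = q * 2 by rewrite divnK // dvdn2 /= oddM m_odd k_odd.
rewrite /msum_perm.
have -> : (((k * (n + 1))%N)%:R / 2%:R = ((k * q)%N)%:R :> rat)%R.
  by rewrite addn1 nq mulnA natrM mulfK.
set w := (\max_(i < n) wsum k p i)%N.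
rewrite -/w; case: (leqP (k * q + 2) w) => [large | small].
  by rewrite -natrB ?ler_nat; lia.
have window_le i : window_sum (pval p) k i <= k * q + 1.
  rewrite (periodic_mod (window_sum_periodic k (pval_periodic p)) i).
  apply: leq_trans (@leq_bigmax _ (fun i : 'I_n => wsum k p i) (Ordinal (ltn_pmod i n_gt0))) _.
  by rewrite -/w; lia.
have := small_windows_le k_odd _ (pval_periodic p) (@pval_inj _ p) (pval_le p) _ window_le.
have := sum_pval p; rewrite -/n nq; lia.
Qed.

Theorem lemma5p3 (m k : nat) :
  odd m -> odd k -> (3 <= k)%N -> (2 * k + 3 <= m)%N ->
  (2%:R <= msum (m * k) k)%R.
Proof.
(* k = 1 needs no separate treatment. *)
move=> m_odd k_odd _ m_ge; rewrite /msum.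
elim/big_ind: _ => [| x y | p _]; try exact: msum_perm_ge2.
by rewrite le_min => -> ->.
Qed.
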